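(* In the setting described in the context, the restriction of the second fundamental form $\mathrm{II}_p$ to $\mathfrak n_-p\times\mathfrak n_-p\to\nu_pM$ is $\mathbb{C}$-bilinear, and consequently $\mathrm{II}_p(fp,f'p)=(ff'p)^\nu$ for all $f,f'\in\mathfrak n_-$.
   Context: Let $K$ be a compact Lie group with Lie algebra $\mathfrak k$, and let $\rho$ be an irreducible orthogonal representation of $K$ which admits a $K$-invariant complex structure; regard it as a complex irreducible representation $V$ of $K$, equipped with the $K$-invariant Hermitian product $\langle\cdot,\cdot\rangle$ whose real part is the original inner product; $S$ denotes the unit sphere of $V$. The complexification $\mathfrak g=\mathfrak k^{\mathbb C}$ acts complex-linearly on $V$. Fix a maximal torus $T$ of $K$ with Lie algebra $\mathfrak t$, let $\mathfrak h=\mathfrak t^{\mathbb C}$ (a Cartan subalgebra of $\mathfrak g$), let $\mathfrak g=\mathfrak h+\sum_{\alpha\in\Delta}\mathfrak g_\alpha$ be the root decomposition, choose a system of positive roots $\Delta^+$, and put $\mathfrak n_-=\sum_{\alpha\in\Delta^+}\mathfrak g_{-\alpha}$. Let $\lambda$ be the highest weight of $V$ and let $p=v_\lambda$ be a unit highest weight vector; let $M=Kp\subset S$. Then $T_pM=\mathfrak k p=i\mathbb{R}p+\mathfrak n_-p$, and the normal space of $M$ in $S$ at $p$ is $\nu_pM=(\mathbb{C}p+\mathfrak n_-p)^\perp$ (Hermitian orthogonal complement). The second fundamental form $\mathrm{II}_p:T_pM\times T_pM\to\nu_pM$ of $M$ in $S$ at $p$ is given by $\mathrm{II}_p(xp,yp)=(xyp)^\nu$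 for $x,y\in\mathfrak k$, where $(\cdot)^\nu$ denotes orthogonal projection onto $\nu_pM$. *)

(* compact Lie algebra data realised concretely as matrices
   over R[i] (R : realType). *)
From HB Require Import structures.
From mathcomp Require Import all_boot all_order all_algebra.
From mathcomp Require Import complex.
From mathcomp Require Import reals.
Set Implicit Arguments. Unset Strict Implicit. Unset Printing Implicit Defensive.
Import Order.TTheory GRing.Theory Num.Theory.
Local Open Scope ring_scope.
Local Open Scope complex_scope.

Section LieSetting.
Variables (R : realType) (n : nat).
Local Notation C := R[i].
Local Notation Mat := 'M[C]_n.
Local Notation V := 'cV[C]_n.

Definition adjmx (X : Mat) : Mat := (map_mx conjc X)^T.

(* Hermitian product on V = C^n, conjugate-linear in the first slot;
   its real part is the standard Euclidean inner product on R^(2n). *)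
Definition hdot (u v : V) : C := \sum_(i < n) conjc (u i 0) * v i 0.

Definition lie_bracket (X Y : Mat) : Mat := X * Y - Y * X.

(* k : the image in End(V) of the Lie algebra of the compact group K acting
   unitarily (hence by skew-Hermitian matrices): a real Lie subalgebra of u(n). *)
Definition unitary_lie_algebra (k : Mat -> Prop) : Prop :=
  [/\ k 0,
      (forall X Y, k X -> k Y -> k (X + Y)),
      (forall (r : R) X, k X -> k (r%:C *: X)),
      (forall X Y, k X -> k Y -> k (lie_bracket X Y)) &
      (forall X, k X -> adjmx X = - X)].

Definition real_subspace (W : V -> Prop) : Prop :=
  [/\ W 0, (forall u v, W u -> W v -> W (u + v)) &
      (forall (r : R) u, W u -> W (r%:C *: u))].

Definition real_irreducible (k : Mat -> Prop) : Prop :=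
  (0 < n)%N /\
  forall W : V -> Prop, real_subspace W ->
    (forall X v, k X -> W v -> W (X *m v)) ->
    (forall v, W v -> v = 0) \/ (forall v, W v).

(* t : Lie algebra of a maximal torus = a maximal abelian subalgebra of k *)
Definition maximal_abelian (k t : Mat -> Prop) : Prop :=
  (forall X, t X -> k X) /\
  [/\ t 0, (forall X Y, t X -> t Y -> t (X + Y)),
      (forall (r : R) X, t X -> t (r%:C *: X)),
      (forall X Y, t X -> t Y -> X * Y = Y * X) &
      (forall X, k X -> (forall Y, t Y -> X * Y = Y * X) -> t X)].

(* complexifications g = k^C and h = t^C, realised inside End(V) *)
Definition complexify (k : Mat -> Prop) (X : Mat) : Prop :=
  exists A B, [/\ k A, k B & X = A + 'i *: B].

Definition root_vector (k t : Mat -> Prop) (alpha : Mat -> C) (X : Mat) : Prop :=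
  complexify k X /\
  forall H, complexify t H -> lie_bracket H X = alpha H *: X.

Definition is_root (k t : Mat -> Prop) (alpha : Mat -> C) : Prop :=
  [/\ (forall (c : C) H1 H2, complexify t H1 -> complexify t H2 ->
          alpha (c *: H1 + H2) = c * alpha H1 + alpha H2),
      (exists H, complexify t H /\ alpha H <> 0) &
      (exists X, X <> 0 /\ root_vector k t alpha X)].

(* A system of positive roots is given by a regular element H0 of t:
   Delta^+ = { alpha | -i alpha(H0) > 0 } (roots are imaginary on t). *)
Definition regular_element (k t : Mat -> Prop) (H0 : Mat) : Prop :=
  t H0 /\ forall alpha, is_root k t alpha -> alpha H0 <> 0.

Definition positive_root (k t : Mat -> Prop) (H0 : Mat) (alpha : Mat -> C) : Prop :=
  is_root k t alpha /\ 0 < complex.Im (alpha H0).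

Definition in_nminus (k t : Mat -> Prop) (H0 : Mat) (X : Mat) : Prop :=
  exists s : seq Mat,
    (forall Y, Y \in s -> exists alpha, positive_root k t H0 alpha /\
        root_vector k t (fun H => - alpha H) Y) /\
    X = \sum_(Y <- s) Y.

Definition highest_weight_vector (k t : Mat -> Prop) (H0 : Mat) (p : V) : Prop :=
  [/\ p <> 0,
      (exists lambda : Mat -> C,
          forall H, complexify t H -> H *m p = lambda H *: p) &
      (forall alpha X, positive_root k t H0 alpha -> root_vector k t alpha X ->
          X *m p = 0)].

Definition tangent_at (k : Mat -> Prop) (p : V) (v : V) : Prop :=
  exists X, k X /\ v = X *m p.

Definition in_nminus_p (k t : Mat -> Prop) (H0 : Mat) (p : V) (v : V) : Prop :=
  exists f, in_nminus k t H0 f /\ v = f *m p.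

(* nu_p M = (C p + n_- p)^perp *)
Definition normal_at (k t : Mat -> Prop) (H0 : Mat) (p : V) (w : V) : Prop :=
  forall (c : C) f, in_nminus k t H0 f -> hdot (c *: p + f *m p) w = 0.

Definition is_normal_projection (k t : Mat -> Prop) (H0 : Mat) (p : V)
    (P : V -> V) : Prop :=
  forall v, normal_at k t H0 p (P v) /\
    forall w, normal_at k t H0 p w -> hdot w (v - P v) = 0.

(* II is the second fundamental form of M = Kp in S at p:
   II_p(xp, yp) = (x y p)^nu for x, y in k *)
Definition is_second_fundamental_form (k : Mat -> Prop) (p : V) (P : V -> V)
    (II : V -> V -> V) : Prop :=
  forall X Y, k X -> k Y -> II (X *m p) (Y *m p) = P (X *m (Y *m p)).

Definition C_bilinear_on (D : V -> Prop) (II : V -> V -> V) : Prop :=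
  forall (c : C) u u' v, D u -> D u' -> D v ->
    II (c *: u + u') v = c *: II u v + II u' v /\
    II v (c *: u + u') = c *: II v u + II v u'.

End LieSetting.

From HB Require Import structures.
From mathcomp Require Import all_boot all_order all_algebra.
From mathcomp Require Import complex reals.
From Stdlib Require Import Classical.
Import Order.TTheory GRing.Theory Num.Theory.
Set Implicit Arguments. Unset Strict Implicit. Unset Printing Implicit Defensive.
Local Open Scope ring_scope.

(* Let σ = uconj be the conjugation of gl_n(C) with respect to u(n), so that k is
   the fixed-point set of σ on g = k^C.  Roots are imaginary on t, hence σ maps
   g_(-a) onto g_a: for f in n_-, σ f lies in n_+ and kills p, while f + σ f lies
   in k and acts on p as f does.  Therefore
     II(fp, f'p) = ((f + σ f)(f' + σ f')p)^nu = (f f'p)^nu + (σ f f'p)^nu.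
   For E in g_b and F in g_(-c) with b, c positive, E F p = [E, F] p with [E, F]
   in g_(b-c); by regularity of H0 this space lies in h, in n_+ or in n_-, so
   [E, F] p lies in C p + n_- p and has no normal component.  Hence (σ f f'p)^nu = 0,
   and C-bilinearity follows from the C-linearity of the orthogonal projection. *)

Section Adjoint.
Variables (R : realType) (n : nat).
Local Notation C := R[i].
Local Notation Mat := 'M[C]_n.
Local Notation V := 'cV[C]_n.
Implicit Types (X Y : Mat) (u v : V).

Lemma adjmxE X i j : adjmx X i j = (X j i)^*.
Proof. by rewrite !mxE. Qed.

Lemma adjmx_is_zmod_morphism : {morph @adjmx R n : X Y / X - Y}.
Proof. by move=> X Y; rewrite /adjmx map_mxB linearB. Qed.

HB.instance Definition _ :=
  GRing.isZmodMorphism.Build Mat Mat (@adjmx R n) adjmx_is_zmod_morphism.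

Lemma adjmxZ (c : C) X : adjmx (c *: X) = c^* *: adjmx X.
Proof. by rewrite /adjmx map_mxZ linearZ. Qed.

Lemma adjmxK : involutive (@adjmx R n).
Proof. by move=> X; apply/matrixP=> i j; rewrite !adjmxE conjCK. Qed.

Lemma adjmxM X Y : adjmx (X * Y) = adjmx Y * adjmx X.
Proof. by rewrite /adjmx -!mulmxE map_mxM trmx_mul. Qed.

Lemma mxtrace_adjmx X : \tr (adjmx X) = (\tr X)^*.
Proof. by rewrite /mxtrace rmorph_sum; apply: eq_bigr => i _; rewrite adjmxE. Qed.

Lemma conjC_mul_ge0 (x : C) : 0 <= x^* * x.
Proof. by rewrite mulrC mul_conjC_ge0. Qed.

Lemma conjC_mul_eq0 (x : C) : x^* * x = 0 -> x = 0.
Proof. by move/eqP; rewrite mulrC mul_conjC_eq0 => /eqP. Qed.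

Lemma mxtrace_adjmx_mul_eq0 X : \tr (adjmx X * X) = 0 -> X = 0.
Proof.
have term_ge0 i l : 0 <= adjmx X i l * X l i by rewrite adjmxE conjC_mul_ge0.
have diag_ge0 i : 0 <= (adjmx X * X) i i by rewrite -mulmxE mxE sumr_ge0.
move=> trX0; apply/matrixP=> l i; rewrite mxE; apply: conjC_mul_eq0.
have := psumr_eq0P (fun i _ => diag_ge0 i) trX0 (i := i) isT.
rewrite -mulmxE mxE => /(psumr_eq0P (fun l _ => term_ge0 i l)) col0.
by have := col0 l isT; rewrite adjmxE.
Qed.

Lemma hdotDr u v w : hdot u (v + w) = hdot u v + hdot u w.
Proof. by rewrite /hdot -big_split; apply: eq_bigr => l _; rewrite mxE mulrDr. Qed.

Lemma hdotZr (c : C) u v : hdot u (c *: v) = c * hdot u v.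
Proof. by rewrite /hdot mulr_sumr; apply: eq_bigr => l _; rewrite mxE mulrCA. Qed.

Lemma hdotC u v : hdot v u = (hdot u v)^*.
Proof.
by rewrite /hdot rmorph_sum; apply: eq_bigr => l _; rewrite rmorphM /= conjCK mulrC.
Qed.

Lemma hdotBr u v w : hdot u (v - w) = hdot u v - hdot u w.
Proof. by rewrite hdotDr -scaleN1r hdotZr mulN1r. Qed.

Lemma hdot_eq0 u : hdot u u = 0 -> u = 0.
Proof.
move=> /(psumr_eq0P (fun i _ => conjC_mul_ge0 (u i 0))) uu0.
by apply/matrixP=> l j; rewrite (ord1 j) mxE; apply: conjC_mul_eq0; apply: uu0.
Qed.

End Adjoint.

Section UnitaryConjugation.
Variables (R : realType) (n : nat).
Local Notation C := R[i].
Local Notation Mat := 'M[C]_n.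
Implicit Types (X Y : Mat).

(* [conjCi] at [R[i]]; the generic lemma does not rewrite in goals over [R[i]]. *)
Lemma conj_i : ('i : C)^* = - 'i.
Proof. exact: conjCi. Qed.

(* A + i B |-> A - i B for skew-Hermitian A and B. *)
Definition uconj X : Mat := - adjmx X.

Lemma uconj_is_zmod_morphism : {morph uconj : X Y / X - Y}.
Proof. by move=> X Y; rewrite /uconj raddfB opprD. Qed.

HB.instance Definition _ :=
  GRing.isZmodMorphism.Build Mat Mat uconj uconj_is_zmod_morphism.

Lemma uconjK : involutive uconj.
Proof. by move=> X; rewrite /uconj raddfN /= adjmxK opprK. Qed.

Lemma uconjZ (c : C) X : uconj (c *: X) = c^* *: uconj X.
Proof. by rewrite /uconj adjmxZ scalerN. Qed.

Lemma uconj_skew X : adjmx X = - X -> uconj X = X.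
Proof. by rewrite /uconj => ->; rewrite opprK. Qed.

Lemma uconj_bracket X Y : uconj (lie_bracket X Y) = lie_bracket (uconj X) (uconj Y).
Proof. by rewrite /uconj /lie_bracket raddfB /= !adjmxM !mulrNN opprB. Qed.

Lemma uconj_rect X Y : adjmx X = - X -> adjmx Y = - Y ->
  uconj (X + 'i *: Y) = X - 'i *: Y.
Proof. by move=> skX skY; rewrite raddfD /= uconjZ !uconj_skew // conj_i scaleNr. Qed.

Lemma skew_rect_eq0 X Y : adjmx X = - X -> adjmx Y = - Y ->
  X + 'i *: Y = 0 -> X = 0 /\ Y = 0.
Proof.
move=> skX skY XY0.
have XY0' : X - 'i *: Y = 0 by rewrite -uconj_rect // XY0 raddf0.
have X0 : X = 0.
  have : (X + 'i *: Y) + (X - 'i *: Y) = 2%:R *: X.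
    by rewrite addrACA subrr addr0 scaler_nat.
  by rewrite XY0 XY0' addr0 => /esym/eqP; rewrite scaler_eq0 pnatr_eq0 => /eqP.
split=> //; move: XY0; rewrite X0 add0r => /eqP.
by rewrite scaler_eq0 (negPf (neq0Ci _)) => /eqP.
Qed.

End UnitaryConjugation.

Section LieBracket.
Variables (R : realType) (n : nat).
Local Notation C := R[i].
Local Notation Mat := 'M[C]_n.
Implicit Types (X Y Z : Mat).

Lemma lie_bracketDl X Y Z : lie_bracket (X + Y) Z = lie_bracket X Z + lie_bracket Y Z.
Proof. by rewrite /lie_bracket mulrDl mulrDr opprD addrACA. Qed.

Lemma lie_bracketDr X Y Z : lie_bracket X (Y + Z) = lie_bracket X Y + lie_bracket X Z.
Proof. by rewrite /lie_bracket mulrDl mulrDr opprD addrACA. Qed.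

Lemma lie_bracketZl (c : C) X Y : lie_bracket (c *: X) Y = c *: lie_bracket X Y.
Proof. by rewrite /lie_bracket -!mulmxE -scalemxAl -scalemxAr scalerBr. Qed.

Lemma lie_bracketZr (c : C) X Y : lie_bracket X (c *: Y) = c *: lie_bracket X Y.
Proof. by rewrite /lie_bracket -!mulmxE -scalemxAl -scalemxAr scalerBr. Qed.

Lemma lie_bracketBr X Y Z : lie_bracket X (Y - Z) = lie_bracket X Y - lie_bracket X Z.
Proof. by rewrite lie_bracketDr -scaleN1r lie_bracketZr scaleN1r. Qed.

Lemma lie_bracketMr H X Y :
  lie_bracket H (X * Y) = lie_bracket H X * Y + X * lie_bracket H Y.
Proof. by rewrite /lie_bracket mulrBl mulrBr !mulrA subrKA. Qed.

(* [ad H] is skew-adjoint for the positive definite form (X, Y) |-> tr(X^* Y). *)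
Lemma skew_bracket_eigenvalue_imaginary H X (c : C) :
  adjmx H = - H -> X <> 0 -> lie_bracket H X = c *: X -> c^* = - c.
Proof.
move=> skH X0 HX; pose T := \tr (adjmx X * X).
have T_real : T^* = T by rewrite -mxtrace_adjmx adjmxM adjmxK.
have T_neq0 : T != 0 by apply/eqP => /mxtrace_adjmx_mul_eq0.
have trHX : \tr (adjmx X * lie_bracket H X) = c * T.
  by rewrite HX -!mulmxE -scalemxAr mxtraceZ.
have : (\tr (adjmx X * lie_bracket H X))^* = - \tr (adjmx X * lie_bracket H X).
  rewrite -mxtrace_adjmx adjmxM adjmxK /lie_bracket raddfB /= !adjmxM skH.
  rewrite mulrBr mulrBl !mulrN !mulNr !mulrA !raddfB /= !raddfN /=.
  by congr (_ - - _); rewrite -mulrA -!mulmxE mxtrace_mulC.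
rewrite trHX rmorphM /= T_real => /eqP; rewrite -mulNr -subr_eq0 -mulrBl mulf_eq0.
by rewrite (negPf T_neq0) orbF subr_eq0 => /eqP.
Qed.

End LieBracket.

Section OrthogonalProjection.
Variables (R : realType) (n : nat).
Local Notation V := 'cV[R[i]]_n.
Variables (W : V -> Prop) (P : V -> V).
Hypothesis W_lin : forall (c : R[i]) w1 w2, W w1 -> W w2 -> W (c *: w1 + w2).
Hypothesis P_proj : forall v, W (P v) /\ forall w, W w -> hdot w (v - P v) = 0.

Lemma proj_unique v w :
  W w -> (forall w', W w' -> hdot w' (v - w) = 0) -> P v = w.
Proof.
move=> Ww vw_ortho; have [WPv vPv_ortho] := P_proj v.
have Wd : W (P v - w) by rewrite addrC -scaleN1r; apply: W_lin.
apply/eqP; rewrite -subr_eq0; apply/eqP/hdot_eq0.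
have -> : hdot (P v - w) (P v - w) = hdot (P v - w) ((v - w) - (v - P v)).
  by rewrite opprB [(v - w) + _]addrC subrKA.
by rewrite hdotBr vw_ortho // vPv_ortho // subrr.
Qed.

Lemma proj_linear (c : R[i]) u v : P (c *: u + v) = c *: P u + P v.
Proof.
have [WPu uPu_ortho] := P_proj u; have [WPv vPv_ortho] := P_proj v.
apply: proj_unique => [|w Ww]; first exact: W_lin.
rewrite opprD addrACA -scalerBr.
by rewrite hdotDr hdotZr uPu_ortho // vPv_ortho // mulr0 addr0.
Qed.

Lemma proj0 : P 0 = 0.
Proof. by have := proj_linear (-1) 0 0; rewrite scaler0 addr0 scaleN1r addNr. Qed.

Lemma projD u v : P (u + v) = P u + P v.
Proof. by have := proj_linear 1 u v; rewrite !scale1r. Qed.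

Lemma proj_sum (I : Type) (r : seq I) (F : I -> V) :
  P (\sum_(i <- r) F i) = \sum_(i <- r) P (F i).
Proof. exact: (big_morph P projD proj0). Qed.

Lemma proj_eq0 v : (forall w, W w -> hdot v w = 0) -> P v = 0.
Proof.
move=> v_ortho; apply: proj_unique => [|w Ww].
  by rewrite -proj0; case: (P_proj 0).
by rewrite subr0 hdotC v_ortho // rmorph0.
Qed.

End OrthogonalProjection.

Definition skew_real_subspace (R : realType) (n : nat) (s : 'M[R[i]]_n -> Prop) :=
  [/\ s 0, (forall X Y, s X -> s Y -> s (X + Y)),
      (forall (r : R) X, s X -> s ((r%:C)%C *: X)) &
      (forall X, s X -> adjmx X = - X)].

Section Complexification.
Variables (R : realType) (n : nat).
Local Notation C := R[i].
Local Notation Mat := 'M[C]_n.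
Variable s : Mat -> Prop.
Hypothesis hs : skew_real_subspace s.
Local Notation cs := (complexify s).
Implicit Types (X Y : Mat).

Lemma skew_real_subspaceN X : s X -> s (- X).
Proof. by case: hs => _ _ sZ _ /(sZ (-1)); rewrite rmorphN1 scaleN1r. Qed.

Lemma complexify_real X : s X -> cs X.
Proof. by case: hs => s0 _ _ _ sX; exists X, 0; rewrite scaler0 addr0. Qed.

Lemma complexifyD X Y : cs X -> cs Y -> cs (X + Y).
Proof.
case: hs => _ sD _ _ [A [B [sA sB ->]]] [A' [B' [sA' sB' ->]]].
by exists (A + A'), (B + B'); rewrite scalerDr addrACA; split=> //; apply: sD.
Qed.

Lemma complexify_scaleR (r : R) X : cs X -> cs ((r%:C)%C *: X).
Proof.
case: hs => _ _ sZ _ [A [B [sA sB ->]]].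
exists ((r%:C)%C *: A), ((r%:C)%C *: B).
by rewrite scalerDr !scalerA mulrC; split=> //; apply: sZ.
Qed.

Lemma complexify_scalei X : cs X -> cs ('i *: X).
Proof.
move=> [A [B [sA sB ->]]]; exists (- B), A; split=> //; first exact: skew_real_subspaceN.
by rewrite scalerDr scalerA mulCii scaleN1r addrC.
Qed.

Lemma complexifyZ (c : C) X : cs X -> cs (c *: X).
Proof.
move=> csX; rewrite [c]complexE scalerDl -scalerA.
by apply: complexifyD; [|apply: complexify_scalei]; apply: complexify_scaleR.
Qed.

Lemma complexify_sum (r : seq Mat) : (forall X, X \in r -> cs X) -> cs (\sum_(X <- r) X).
Proof.
move=> rs; rewrite big_seq; apply: big_ind => //; last exact: complexifyD.
by case: hs => s0 _ _ _; apply: complexify_real.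
Qed.

Lemma complexify_uconj X : cs X -> cs (uconj X).
Proof.
case: hs => _ _ _ skew [A [B [sA sB ->]]].
exists A, (- B); rewrite uconj_rect ?skew // scalerN; split=> //.
exact: skew_real_subspaceN.
Qed.

Lemma complexify_re X : cs X -> s (X + uconj X).
Proof.
case: hs => _ sD _ skew [A [B [sA sB ->]]].
by rewrite uconj_rect ?skew // addrACA subrr addr0; apply: sD.
Qed.

End Complexification.

Lemma unitary_lie_algebra_skew (R : realType) (n : nat) (k : 'M[R[i]]_n -> Prop) :
  unitary_lie_algebra k -> skew_real_subspace k.
Proof. by case. Qed.

Lemma complexify_bracket (R : realType) (n : nat) (k : 'M[R[i]]_n -> Prop) X Y :
  unitary_lie_algebra k -> complexify k X -> complexify k Y ->
  complexify k (lie_bracket X Y).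
Proof.
move=> hk [A [B [kA kB ->]]] [A' [B' [kA' kB' ->]]].
have hs := unitary_lie_algebra_skew hk.
have kbr U U' : k U -> k U' -> complexify k (lie_bracket U U').
  by case: hk => _ _ _ kbr _ kU kU'; apply: complexify_real (kbr _ _ kU kU').
rewrite !lie_bracketDl !lie_bracketDr !lie_bracketZl !lie_bracketZr.
by do ?[apply: kbr | apply: (complexifyD hs) | apply: (complexifyZ hs)].
Qed.

Lemma Im_neq0_imaginary (R : realType) (z : R[i]) :
  z^* = - z -> z <> 0 -> complex.Im z != 0.
Proof.
case: z => a b /eqP; rewrite eq_complex /= => /andP [/eqP aNa _] z0.
apply/eqP => b0; apply: z0; rewrite b0.
have : a *+ 2 = 0 by rewrite mulr2n {2}aNa subrr.
by move/eqP; rewrite mulrn_eq0 => /eqP ->.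
Qed.

Definition linear_on (R : realType) (n : nat) (D : 'M[R[i]]_n -> Prop)
    (a : 'M[R[i]]_n -> R[i]) :=
  forall c H1 H2, D H1 -> D H2 -> a (c *: H1 + H2) = c * a H1 + a H2.

Lemma linear_onD (R : realType) (n : nat) (D : 'M[R[i]]_n -> Prop) a b :
  linear_on D a -> linear_on D b -> linear_on D (fun H => a H + b H).
Proof.
by move=> alin blin c H1 H2 D1 D2; rewrite alin // blin // mulrDr addrACA.
Qed.

Lemma linear_onN (R : realType) (n : nat) (D : 'M[R[i]]_n -> Prop) a :
  linear_on D a -> linear_on D (fun H => - a H).
Proof. by move=> alin c H1 H2 D1 D2; rewrite alin // mulrN opprD. Qed.

Section RootSpaces.
Variables (R : realType) (n : nat).
Local Notation C := R[i].
Local Notation Mat := 'M[C]_n.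
Local Notation V := 'cV[C]_n.
Variables (k t : Mat -> Prop) (H0 : Mat) (p : V).
Hypotheses (hk : unitary_lie_algebra k) (ht : maximal_abelian k t).
Hypotheses (hreg : regular_element k t H0) (hhw : highest_weight_vector k t H0 p).
Local Notation cx := (complexify k).
Local Notation ct := (complexify t).
Local Notation N := (in_nminus k t H0).
Local Notation RV := (root_vector k t).

Lemma maximal_abelian_skew : skew_real_subspace t.
Proof.
by case: ht => tk [t0 tD tZ _ _]; split=> // X /tk; case: hk => _ _ _ _; apply.
Qed.

Lemma complexify_centralizer Z :
  cx Z -> (forall H, t H -> lie_bracket H Z = 0) -> ct Z.
Proof.
case: ht => tk [_ _ _ _ tmax]; case: hk => _ _ _ kbr kskew.
move=> [A [B [kA kB ->]]] Zc.
have commAB H : t H -> lie_bracket H A = 0 /\ lie_bracket H B = 0.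
  move=> tH; apply: skew_rect_eq0; [exact: kskew (kbr _ _ (tk _ tH) kA)|..].
    exact: kskew (kbr _ _ (tk _ tH) kB).
  by rewrite -lie_bracketZr -lie_bracketDr Zc.
have cent U : k U -> (forall H, t H -> lie_bracket H U = 0) -> t U.
  move=> kU Uc; apply: tmax => // H /Uc /eqP.
  by rewrite subr_eq0 => /eqP ->.
by exists A, B; split=> //; apply: cent => // H /commAB [].
Qed.

Lemma root_vector_ext a b X :
  (forall H, ct H -> a H = b H) -> RV a X -> RV b X.
Proof. by move=> ab [cX aX]; split=> // H cH; rewrite -ab // aX. Qed.

Lemma root_vectorZ a (c : C) X : RV a X -> RV a (c *: X).
Proof.
move=> [cX aX]; split; first exact: (complexifyZ (unitary_lie_algebra_skew hk)).
by move=> H cH; rewrite lie_bracketZr aX // !scalerA mulrC.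
Qed.

Lemma root_vector_bracket a b X Y :
  RV a X -> RV b Y -> RV (fun H => a H + b H) (lie_bracket X Y).
Proof.
move=> [cX aX] [cY bY]; split; first exact: complexify_bracket.
move=> H cH; rewrite {2 3}/lie_bracket lie_bracketBr !lie_bracketMr aX // bY //.
by rewrite -!mulmxE -!scalemxAl -!scalemxAr -!scalerDl [b H + _]addrC -scalerBr.
Qed.

Lemma root_vector_imaginary a X H : RV a X -> X <> 0 -> t H -> (a H)^* = - a H.
Proof.
move=> [_ aX] X0 tH; have [_ _ _ skew] := maximal_abelian_skew.
apply: skew_bracket_eigenvalue_imaginary (skew _ tH) X0 (aX _ _).
by apply: (complexify_real maximal_abelian_skew).
Qed.

(* [H, σ X] = σ [σ H, X], and -(a (σ H))^* = a H since a is C-linear and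
   imaginary on t. *)
Lemma root_vector_uconj a X :
  linear_on ct a -> (forall H, t H -> (a H)^* = - a H) ->
  RV (fun H => - a H) X -> RV a (uconj X).
Proof.
have hs := maximal_abelian_skew; have [_ _ _ skew] := hs.
move=> alin aim [cX aX]; split.
  exact: (complexify_uconj (unitary_lie_algebra_skew hk)).
move=> _ [A [B [tA tB ->]]].
have [cA cB] : ct A /\ ct B by split; apply: (complexify_real hs).
have cH' : ct (A - 'i *: B).
  by rewrite -uconj_rect ?skew //; apply: (complexify_uconj hs); exists A, B.
rewrite -{1}[A + _]uconjK -uconj_bracket uconj_rect ?skew // aX // uconjZ.
congr (_ *: _); rewrite -scaleNr ![A + _]addrC !alin // rmorphN rmorphD rmorphM /=.
by rewrite rmorphN /= conj_i opprK aim // aim // mulrN opprD !opprK.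
Qed.

Lemma root_vector_uconj_positive a X :
  positive_root k t H0 a -> RV (fun H => - a H) X -> RV a (uconj X).
Proof.
move=> [[alin _ [Y [Y0 aY]]] _]; apply: root_vector_uconj => // H.
exact: root_vector_imaginary aY Y0.
Qed.

Lemma in_nminus0 : N 0.
Proof. by exists [::]; rewrite big_nil. Qed.

Lemma in_nminus_lin (c : C) f g : N f -> N g -> N (c *: f + g).
Proof.
move=> [r [rroots ->]] [r' [rroots' ->]].
exists (map (fun Y => c *: Y) r ++ r'); rewrite big_cat big_map scaler_sumr.
split=> // Y; rewrite mem_cat => /orP [/mapP [Y' /rroots [a [apos aY']] ->] |].
  by exists a; split=> //; apply: root_vectorZ.
exact: rroots'.
Qed.

Lemma in_nminus_complexify f : N f -> cx f.
Proof.
move=> [r [rroots ->]]; apply: (complexify_sum (unitary_lie_algebra_skew hk)).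
by move=> Y /rroots [a [_ []]].
Qed.

Lemma uconj_nminus_mulmx_hw f : N f -> uconj f *m p = 0.
Proof.
have [_ _ kill] := hhw.
move=> [r [rroots ->]]; rewrite raddf_sum mulmx_suml big_seq big1 // => Y.
move=> /rroots [a [apos aY]].
by apply: (kill a) => //; apply: root_vector_uconj_positive aY.
Qed.

Lemma root_Im_neq0 d Z : linear_on ct d -> RV d Z -> Z <> 0 ->
  (exists H, ct H /\ d H <> 0) -> complex.Im (d H0) != 0.
Proof.
move=> dlin dZ Z0 dnz; have [tH0 dH0] := hreg.
apply: Im_neq0_imaginary; first exact: root_vector_imaginary dZ Z0 tH0.
by apply: dH0; split=> //; exists Z.
Qed.

Lemma negative_root_vector_in_nminus d Z : linear_on ct d -> RV d Z -> Z <> 0 ->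
  complex.Im (d H0) < 0 -> N Z.
Proof.
move=> dlin dZ Z0 dH0_neg; pose e H := - d H.
have tH0 : t H0 by case: hreg.
have eZ : RV (fun H => - e H) Z by apply: root_vector_ext dZ => H _; rewrite opprK.
have eZ' : RV e (uconj Z).
  apply: root_vector_uconj eZ; first exact: linear_onN.
  by move=> H tH; rewrite rmorphN /= (root_vector_imaginary dZ Z0 tH).
have epos : positive_root k t H0 e.
  have eH0_pos : 0 < complex.Im (e H0).
    by rewrite /e; case: (d H0) dH0_neg => ? ? /=; rewrite oppr_gt0.
  split=> //; split; first exact: linear_onN.
    exists H0; split; first exact: (complexify_real maximal_abelian_skew).
    by move=> eH0; move: eH0_pos; rewrite eH0 ltxx.
  by exists (uconj Z); split=> // Z'0; apply: Z0; rewrite -[Z]uconjK Z'0 raddf0.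
exists [:: Z]; split; last by rewrite big_seq1.
by move=> Y; rewrite mem_seq1 => /eqP ->; exists e.
Qed.

Lemma root_vector_mulmx_hw d Z : linear_on ct d -> RV d Z ->
  exists c f, N f /\ Z *m p = c *: p + f *m p.
Proof.
move=> dlin dZ; have [_ [lambda lambdaP] kill] := hhw; have [cZ Zd] := dZ.
have [-> | /eqP Z0] := eqVneq Z 0.
  by exists 0, 0; rewrite !mul0mx scale0r addr0; split=> //; apply: in_nminus0.
have [dnz | d0] := classic (exists H, ct H /\ d H <> 0); last first.
  have ctZ : ct Z.
    apply: (complexify_centralizer cZ) => H tH.
    have cH : ct H by apply: (complexify_real maximal_abelian_skew).
    rewrite Zd //; suff -> : d H = 0 by rewrite scale0r.
    by apply: NNPP => dH; apply: d0; exists H.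
  by exists (lambda Z), 0; rewrite lambdaP // mul0mx addr0; split=> //; apply: in_nminus0.
have := root_Im_neq0 dlin dZ Z0 dnz; rewrite neq_lt => /orP [dH0_neg | dH0_pos].
  exists 0, Z; rewrite scale0r add0r; split=> //.
  exact: negative_root_vector_in_nminus dH0_neg.
exists 0, 0; rewrite scale0r mul0mx addr0; split; first exact: in_nminus0.
by apply: (kill d) => //; split=> //; split=> //; exists Z.
Qed.

Lemma normal_at_lin (c : C) w1 w2 : normal_at k t H0 p w1 -> normal_at k t H0 p w2 ->
  normal_at k t H0 p (c *: w1 + w2).
Proof. by move=> w1N w2N c' f Nf; rewrite hdotDr hdotZr w1N // w2N // mulr0 addr0. Qed.

Variable P : V -> V.
Hypothesis hP : is_normal_projection k t H0 p P.

Lemma normal_proj_root_vector_mulmx d Z : linear_on ct d -> RV d Z -> P (Z *m p) = 0.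
Proof.
move=> dlin dZ; have [c [f [Nf ->]]] := root_vector_mulmx_hw dlin dZ.
by apply: (proj_eq0 normal_at_lin hP) => w /(_ c f Nf).
Qed.

Lemma normal_proj_uconj_nminus_mulmx f g : N f -> N g -> P (uconj f *m (g *m p)) = 0.
Proof.
have [_ _ kill] := hhw.
move=> [r [rroots ->]] [r' [rroots' ->]].
rewrite raddf_sum mulmx_suml (proj_sum normal_at_lin hP) big_seq big1 // => Y.
move=> /rroots [a [apos aY]]; have aY' := root_vector_uconj_positive apos aY.
rewrite mulmx_suml mulmx_sumr (proj_sum normal_at_lin hP) big_seq big1 // => Y'.
move=> /rroots' [b [[[blin _ _] _] bY']].
have -> : uconj Y *m (Y' *m p) = lie_bracket (uconj Y) Y' *m p.
  rewrite mulmxA -[uconj Y *m Y'](subrK (Y' *m uconj Y)) mulmxDl -mulmxA.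
  by rewrite (kill a (uconj Y)) // mulmx0 addr0.
apply: normal_proj_root_vector_mulmx (root_vector_bracket aY' bY').
by apply: linear_onD; [case: apos => [[]] | apply: linear_onN].
Qed.

Lemma second_fundamental_form_nminus II f g : is_second_fundamental_form k p P II ->
  N f -> N g -> II (f *m p) (g *m p) = P (f *m (g *m p)).
Proof.
have re_k h : N h -> k (h + uconj h).
  by move=> /in_nminus_complexify; apply: (complexify_re (unitary_lie_algebra_skew hk)).
have re_p h : N h -> (h + uconj h) *m p = h *m p.
  by move=> Nh; rewrite mulmxDl uconj_nminus_mulmx_hw // addr0.
move=> hII Nf Ng; have [kf kg] := (re_k f Nf, re_k g Ng).
rewrite -(re_p f) // -(re_p g) // hII // re_p //.
by rewrite mulmxDl (projD normal_at_lin hP) normal_proj_uconj_nminus_mulmx // addr0.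
Qed.

End RootSpaces.

Theorem mainTheorem3 (R : realType) (n : nat)
  (k t : 'M[R[i]]_n -> Prop) (H0 : 'M[R[i]]_n) (p : 'cV[R[i]]_n)
  (P : 'cV[R[i]]_n -> 'cV[R[i]]_n) (II : 'cV[R[i]]_n -> 'cV[R[i]]_n -> 'cV[R[i]]_n) :
  unitary_lie_algebra k ->
  real_irreducible k ->
  maximal_abelian k t ->
  regular_element k t H0 ->
  highest_weight_vector k t H0 p ->
  hdot p p = 1 ->
  is_normal_projection k t H0 p P ->
  is_second_fundamental_form k p P II ->
  C_bilinear_on (in_nminus_p k t H0 p) II /\
  (forall f f', in_nminus k t H0 f -> in_nminus k t H0 f' ->
     II (f *m p) (f' *m p) = P (f *m (f' *m p))).
Proof.
move=> hk _ ht hreg hhw _ hP hII.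
have IIE f g := second_fundamental_form_nminus hk ht hreg hhw hP (f := f) (g := g) hII.
split=> [c _ _ _ [f [Nf ->]] [f' [Nf' ->]] [g [Ng ->]] |]; last exact: IIE.
have Plin := proj_linear (@normal_at_lin _ _ k t H0 p) hP.
have Ncf := in_nminus_lin hk c Nf Nf'.
rewrite scalemxAl -mulmxDl !IIE //.
by split; rewrite !(mulmxDl, mulmxDr) -!(scalemxAl, scalemxAr) Plin.
Qed.
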